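(* Let $M$ be a free $\mathbb{D}$-module with a finite $\mathbb{D}$-basis $\{\widehat m_1,\dots,\widehat m_n\}$, $V=\{\sum_l x_l\widehat m_l: x_l\in\mathbb{R}\}$, and $(\cdot,\cdot)$ a hyperbolic scalar product on $M$ which is hyperbolic positive and closed on $V$. Let $\widehat X,\widehat Y\in M$ with $\widehat X_{\mathbf{e_k}},\widehat Y_{\mathbf{e_k}}\ne0$ for $k=1,2$, and let $\theta_k\in[0,\pi]$ be the angle between $\widehat X_{\mathbf{e_k}}$ and $\widehat Y_{\mathbf{e_k}}$ in the real inner product space $V$, i.e. $\cos\theta_k=(\widehat X_{\mathbf{e_k}},\widehat Y_{\mathbf{e_k}})/(\|\widehat X_{\mathbf{e_k}}\|\,\|\widehat Y_{\mathbf{e_k}}\|)$. Then $$\cos\Big(\frac{\theta_1+\theta_2}{2}+\frac{\theta_1-\theta_2}{2}\mathbf{j}\Big)=\frac{(\widehat X,\widehat Y)}{(\widehat X,\widehat X)^{1/2}(\widehat Y,\widehat Y)^{1/2}}.$$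
   Context: Hyperbolic numbers: $\mathbb{D}=\{x+y\mathbf{j}: x,y\in\mathbb{R}\}$ with $\mathbf{j}^2=1$, a commutative ring. Idempotents $\mathbf{e_1}=(1+\mathbf{j})/2$, $\mathbf{e_2}=(1-\mathbf{j})/2$, with $\mathbf{e_1}^2=\mathbf{e_1}$, $\mathbf{e_2}^2=\mathbf{e_2}$, $\mathbf{e_1}\mathbf{e_2}=0$, $\mathbf{e_1}+\mathbf{e_2}=1$; every hyperbolic number is uniquely $a\mathbf{e_1}+b\mathbf{e_2}$ with $a,b\in\mathbb{R}$. $\mathbb{D}^+=\{a\mathbf{e_1}+b\mathbf{e_2}: a,b\ge0\}$, and $(a\mathbf{e_1}+b\mathbf{e_2})^{1/2}=\sqrt a\,\mathbf{e_1}+\sqrt b\,\mathbf{e_2}$. The cosine of $w\in\mathbb{D}$ is $\cos w=\sum_{n\ge0}(-1)^nw^{2n}/(2n)!$. For $\widehat X=\sum_l x_l\widehat m_l\in M$ with $x_l=x_{1l}\mathbf{e_1}+x_{2l}\mathbf{e_2}$, $x_{kl}\in\mathbb{R}$, put $\widehat X_{\mathbf{e_k}}=\sum_l x_{kl}\widehat m_l\in V$. A hyperbolic scalar product is a map $(\cdot,\cdot):M\times M\to\mathbb{D}$ with $(\widehat X,\widehat Y_1+\widehat Y_2)=(\widehat X,\widehat Y_1)+(\widehat X,\widehat Y_2)$, $(\widehat X,\alpha\widehat Y)=\alpha(\widehat X,\widehat Y)$ for $\alpha\in\mathbb{D}$, $(\widehat X,\widehat Y)=(\widehat Y,\widehat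 X)$, and $(\widehat X,\widehat X)=0\iff\widehat X=0$; it is hyperbolic positive if $(\widehat X,\widehat X)\in\mathbb{D}^+$ for all $\widehat X\in M$, and closed on $V$ if $(\widehat X,\widehat Y)\in\mathbb{R}$ for all $\widehat X,\widehat Y\in V$. For $\widehat Z\in V$, $\|\widehat Z\|=(\widehat Z,\widehat Z)^{1/2}$. *)

From Stdlib Require Import Reals Factorial.
From Coquelicot Require Import Coquelicot.
From mathcomp Require fintype.
Open Scope R_scope.
Set Implicit Arguments.

(* Hyperbolic numbers x + y j, j^2 = 1 *)
Record D := mkD { Dre : R; Dhy : R }.

Definition Dzero : D := mkD 0 0.
Definition Done : D := mkD 1 0.
Definition Dadd (a b : D) : D := mkD (Dre a + Dre b) (Dhy a + Dhy b).
Definition Dmul (a b : D) : D :=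
  mkD (Dre a * Dre b + Dhy a * Dhy b) (Dre a * Dhy b + Dhy a * Dre b).
(* inverse: (x + y j)^-1 = (x - y j)/(x^2 - y^2)  (meaningful when x^2 <> y^2) *)
Definition Dinv (a : D) : D :=
  mkD (Dre a / (Dre a * Dre a - Dhy a * Dhy a))
      (- Dhy a / (Dre a * Dre a - Dhy a * Dhy a)).
Definition Ddiv (a b : D) : D := Dmul a (Dinv b).
Definition Dreal (r : R) : D := mkD r 0.

Fixpoint Dpow (w : D) (k : nat) : D :=
  match k with O => Done | S k' => Dmul w (Dpow w k') end.

(* idempotent coordinates: w = a e1 + b e2 with a = x + y, b = x - y *)
Definition De1 (w : D) : R := Dre w + Dhy w.
Definition De2 (w : D) : R := Dre w - Dhy w.
Definition Dpos (w : D) : Prop := 0 <= De1 w /\ 0 <= De2 w.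
(* (a e1 + b e2)^{1/2} = sqrt a e1 + sqrt b e2 *)
Definition Dsqrt (w : D) : D :=
  mkD ((sqrt (De1 w) + sqrt (De2 w)) / 2) ((sqrt (De1 w) - sqrt (De2 w)) / 2).

Definition Dcos_term (w : D) (k : nat) : D :=
  let c := (-1) ^ k / INR (Factorial.fact (2 * k)%nat) in
  mkD (c * Dre (Dpow w (2 * k)%nat)) (c * Dhy (Dpow w (2 * k)%nat)).
Definition Dcos (w : D) : D :=
  mkD (Series (fun k => Dre (Dcos_term w k))) (Series (fun k => Dhy (Dcos_term w k))).

(* The free D-module M with basis m_1..m_n, elements given by coordinates *)
Definition Mvec (n : nat) := fintype.ordinal n -> D.
Definition Mzero (n : nat) : Mvec n := fun _ => Dzero.
Definition Madd (n : nat) (X Y : Mvec n) : Mvec n := fun l => Dadd (X l) (Y l).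
Definition Mscale (n : nat) (a : D) (X : Mvec n) : Mvec n := fun l => Dmul a (X l).
(* V = real span of the basis *)
Definition inV (n : nat) (X : Mvec n) : Prop := forall l, Dhy (X l) = 0.
(* X_{e_k} = sum_l x_{kl} m_l *)
Definition Mproj1 (n : nat) (X : Mvec n) : Mvec n := fun l => Dreal (De1 (X l)).
Definition Mproj2 (n : nat) (X : Mvec n) : Mvec n := fun l => Dreal (De2 (X l)).

Definition hyp_scalar_product (n : nat) (sp : Mvec n -> Mvec n -> D) : Prop :=
  (forall X Y1 Y2, sp X (Madd Y1 Y2) = Dadd (sp X Y1) (sp X Y2)) /\
  (forall X Y a, sp X (Mscale a Y) = Dmul a (sp X Y)) /\
  (forall X Y, sp X Y = sp Y X) /\
  (forall X, sp X X = Dzero <-> X = @Mzero n).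

Definition hyp_positive (n : nat) (sp : Mvec n -> Mvec n -> D) : Prop :=
  forall X, Dpos (sp X X).

Definition closed_on_V (n : nat) (sp : Mvec n -> Mvec n -> D) : Prop :=
  forall X Y, inV X -> inV Y -> Dhy (sp X Y) = 0.

Definition Mnorm (n : nat) (sp : Mvec n -> Mvec n -> D) (Z : Mvec n) : D :=
  Dsqrt (sp Z Z).

(** In idempotent coordinates [w = a e1 + b e2] (the number [Didem a b])
    the ring [D] is [R × R] with componentwise operations, and the power series
    of [cos] is computed componentwise too, so [cos (a e1 + b e2) = cos a e1 + cos b e2].
    Splitting [X = e1 X_e1 + e2 X_e2] and using [e1 e2 = 0], bilinearity gives
    [(X, Y) = (X_e1, Y_e1) e1 + (X_e2, Y_e2) e2] with real coefficients, and
    likewise for [(X, X)] and [(Y, Y)]; hence the [e_k]-coordinate of the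
    right-hand side is the real cosine quotient of [X_ek] and [Y_ek], that is
    [cos θ_k], while the argument of [cos] on the left is [θ1 e1 + θ2 e2]. *)
From Stdlib Require Import Reals Lra FunctionalExtensionality.
From Coquelicot Require Import Coquelicot.
From mathcomp Require fintype.
Open Scope R_scope.
Set Implicit Arguments.

Definition Didem (a b : R) : D := mkD ((a + b) / 2) ((a - b) / 2).

Lemma De1_idem (a b : R) : De1 (Didem a b) = a.
Proof. unfold De1; simpl; field. Qed.

Lemma De2_idem (a b : R) : De2 (Didem a b) = b.
Proof. unfold De2; simpl; field. Qed.

Lemma D_idem (w : D) : w = Didem (De1 w) (De2 w).
Proof. destruct w as [x y]; unfold Didem, De1, De2; simpl; f_equal; field. Qed.

Lemma Didem_inj (a b c d : R) : Didem a b = Didem c d -> a = c /\ b = d.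
Proof.
  intro E; split.
  - rewrite <- (De1_idem a b), <- (De1_idem c d), E; reflexivity.
  - rewrite <- (De2_idem a b), <- (De2_idem c d), E; reflexivity.
Qed.

Lemma Dreal_idem (r : R) : Dreal r = Didem r r.
Proof. unfold Dreal, Didem; f_equal; field. Qed.

Lemma Dadd_idem (a b c d : R) : Dadd (Didem a b) (Didem c d) = Didem (a + c) (b + d).
Proof. unfold Dadd, Didem; simpl; f_equal; field. Qed.

Lemma Dmul_idem (a b c d : R) : Dmul (Didem a b) (Didem c d) = Didem (a * c) (b * d).
Proof. unfold Dmul, Didem; simpl; f_equal; field. Qed.

Lemma Dinv_idem (a b : R) : a <> 0 -> b <> 0 -> Dinv (Didem a b) = Didem (/ a) (/ b).
Proof.
  intros Ha Hb; unfold Dinv, Didem; simpl.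
  replace ((a + b) / 2 * ((a + b) / 2) - (a - b) / 2 * ((a - b) / 2)) with (a * b) by field.
  f_equal; field; auto.
Qed.

Lemma Dsqrt_idem (a b : R) : Dsqrt (Didem a b) = Didem (sqrt a) (sqrt b).
Proof. unfold Dsqrt; rewrite De1_idem, De2_idem; reflexivity. Qed.

Lemma Dpow_idem (a b : R) (m : nat) : Dpow (Didem a b) m = Didem (a ^ m) (b ^ m).
Proof.
  induction m as [|m IH]; simpl.
  - unfold Done, Didem; f_equal; field.
  - rewrite IH, Dmul_idem; reflexivity.
Qed.

Lemma Ddiv_sqrt_idem (a1 a2 b1 b2 c1 c2 : R) :
  0 < b1 -> 0 < b2 -> 0 < c1 -> 0 < c2 ->
  Ddiv (Didem a1 a2) (Dmul (Dsqrt (Didem b1 b2)) (Dsqrt (Didem c1 c2))) =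
  Didem (a1 / (sqrt b1 * sqrt c1)) (a2 / (sqrt b2 * sqrt c2)).
Proof.
  intros Hb1 Hb2 Hc1 Hc2.
  assert (Hpos := Rmult_lt_0_compat _ _ (sqrt_lt_R0 _ Hb1) (sqrt_lt_R0 _ Hc1)).
  assert (Hpos' := Rmult_lt_0_compat _ _ (sqrt_lt_R0 _ Hb2) (sqrt_lt_R0 _ Hc2)).
  unfold Ddiv; rewrite !Dsqrt_idem, Dmul_idem, Dinv_idem, Dmul_idem by lra.
  reflexivity.
Qed.

Lemma cos_series (x : R) :
  is_series (fun k => (-1) ^ k / INR (Factorial.fact (2 * k)) * x ^ (2 * k)) (cos x).
Proof.
  apply is_series_Reals; unfold cos.
  destruct (exist_cos (Rsqr x)) as [l Hl].
  intros eps Heps; destruct (Hl eps Heps) as [N HN]; exists N; intros m Hm.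
  replace (sum_f_R0 _ m) with (sum_f_R0 (fun i => cos_n i * Rsqr x ^ i) m)
    by (apply sum_eq; intros i _; unfold cos_n; rewrite pow_mult, <- Rsqr_pow2; reflexivity).
  apply HN; assumption.
Qed.

Lemma Series_half_comb (u v : nat -> R) (lu lv s : R) :
  is_series u lu -> is_series v lv ->
  Series (fun k => (u k + v k * s) / 2) = (lu + lv * s) / 2.
Proof.
  intros Hu Hv; apply is_series_unique.
  exact (is_series_scal_r (/ 2) _ _ (is_series_plus _ _ _ _ Hu (is_series_scal_r s _ _ Hv))).
Qed.

Lemma Dcos_idem (a b : R) : Dcos (Didem a b) = Didem (cos a) (cos b).
Proof.
  set (t := fun (x : R) (k : nat) => (-1) ^ k / INR (Factorial.fact (2 * k)) * x ^ (2 * k)).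
  assert (Hre : forall k, Dre (Dcos_term (Didem a b) k) = (t a k + t b k * 1) / 2).
  { intro k; unfold Dcos_term, t; rewrite Dpow_idem; simpl; unfold Rdiv; ring. }
  assert (Hhy : forall k, Dhy (Dcos_term (Didem a b) k) = (t a k + t b k * -1) / 2).
  { intro k; unfold Dcos_term, t; rewrite Dpow_idem; simpl; unfold Rdiv; ring. }
  unfold Dcos; rewrite (Series_ext _ _ Hre), (Series_ext _ _ Hhy); unfold t.
  rewrite (Series_half_comb 1 (cos_series a) (cos_series b)), (Series_half_comb (-1) (cos_series a) (cos_series b)).
  unfold Didem; f_equal; field.
Qed.

Lemma Mproj1_inV (n : nat) (X : Mvec n) : inV (Mproj1 X).
Proof. intro l; reflexivity. Qed.

Lemma Mproj2_inV (n : nat) (X : Mvec n) : inV (Mproj2 X).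
Proof. intro l; reflexivity. Qed.

Lemma Mvec_idem (n : nat) (X : Mvec n) :
  X = Madd (Mscale (Didem 1 0) (Mproj1 X)) (Mscale (Didem 0 1) (Mproj2 X)).
Proof.
  apply functional_extensionality; intro l.
  unfold Madd, Mscale, Mproj1, Mproj2.
  rewrite !Dreal_idem, !Dmul_idem, Dadd_idem, (D_idem (X l)) at 1.
  f_equal; ring.
Qed.

Section HyperbolicScalarProduct.

Variable n : nat.
Variable sp : Mvec n -> Mvec n -> D.
Hypothesis Hsp : hyp_scalar_product sp.
Hypothesis HV : closed_on_V sp.

Lemma sp_addl (X1 X2 Y : Mvec n) : sp (Madd X1 X2) Y = Dadd (sp X1 Y) (sp X2 Y).
Proof.
  destruct Hsp as [Hadd [_ [Hsym _]]].
  rewrite Hsym, Hadd, (Hsym Y X1), (Hsym Y X2); reflexivity.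
Qed.

Lemma sp_scalel (a : D) (X Y : Mvec n) : sp (Mscale a X) Y = Dmul a (sp X Y).
Proof.
  destruct Hsp as [_ [Hscale [Hsym _]]].
  rewrite Hsym, Hscale, (Hsym Y X); reflexivity.
Qed.

Lemma sp_inV (Z W : Mvec n) : inV Z -> inV W -> sp Z W = Dreal (Dre (sp Z W)).
Proof.
  intros HZ HW; assert (H0 := HV HZ HW).
  destruct (sp Z W) as [x y]; simpl in *; subst y; reflexivity.
Qed.

Lemma sp_idem (X Y : Mvec n) :
  sp X Y = Didem (Dre (sp (Mproj1 X) (Mproj1 Y))) (Dre (sp (Mproj2 X) (Mproj2 Y))).
Proof.
  destruct Hsp as [Hadd [Hscale _]].
  set (s1 := Dre (sp (Mproj1 X) (Mproj1 Y))); set (s2 := Dre (sp (Mproj2 X) (Mproj2 Y))).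
  rewrite (Mvec_idem X) at 1; rewrite (Mvec_idem Y) at 1.
  rewrite sp_addl, !sp_scalel, !Hadd, !Hscale.
  rewrite (sp_inV (Mproj1_inV X) (Mproj1_inV Y)), (sp_inV (Mproj1_inV X) (Mproj2_inV Y)),
    (sp_inV (Mproj2_inV X) (Mproj1_inV Y)), (sp_inV (Mproj2_inV X) (Mproj2_inV Y)).
  rewrite !Dreal_idem; repeat rewrite ?Dmul_idem, ?Dadd_idem.
  f_equal; unfold s1, s2; ring.
Qed.

Hypothesis Hpos : hyp_positive sp.

Lemma sp_inV_gt0 (Z : Mvec n) : inV Z -> Z <> @Mzero n -> 0 < Dre (sp Z Z).
Proof.
  destruct Hsp as [_ [_ [_ Hdef]]].
  intros HZ Hnz; assert (Hge := proj1 (Hpos Z)).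
  rewrite (sp_inV HZ HZ) in Hge |- *; rewrite Dreal_idem, De1_idem in Hge.
  destruct (Rle_lt_or_eq_dec _ _ Hge) as [Hlt | Heq]; [assumption |].
  exfalso; apply Hnz, Hdef.
  rewrite (sp_inV HZ HZ), <- Heq; reflexivity.
Qed.

Lemma sp_inV_cos (Z W : Mvec n) (c : R) :
  inV Z -> inV W -> Z <> @Mzero n -> W <> @Mzero n ->
  Dreal c = Ddiv (sp Z W) (Dmul (Mnorm sp Z) (Mnorm sp W)) ->
  c = Dre (sp Z W) / (sqrt (Dre (sp Z Z)) * sqrt (Dre (sp W W))).
Proof.
  intros HZ HW HZ0 HW0 Hc.
  assert (HZZ := sp_inV_gt0 HZ HZ0); assert (HWW := sp_inV_gt0 HW HW0).
  unfold Mnorm in Hc.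
  rewrite (sp_inV HZ HW), (sp_inV HZ HZ), (sp_inV HW HW), !Dreal_idem,
    Ddiv_sqrt_idem in Hc by assumption.
  exact (proj1 (Didem_inj Hc)).
Qed.

End HyperbolicScalarProduct.

Theorem mainTheorem12 (n : nat) (sp : Mvec n -> Mvec n -> D)
  (Hsp : hyp_scalar_product sp) (Hpos : hyp_positive sp) (HV : closed_on_V sp)
  (X Y : Mvec n)
  (HX1 : Mproj1 X <> @Mzero n) (HX2 : Mproj2 X <> @Mzero n)
  (HY1 : Mproj1 Y <> @Mzero n) (HY2 : Mproj2 Y <> @Mzero n)
  (th1 th2 : R)
  (Hth1 : 0 <= th1 <= PI) (Hth2 : 0 <= th2 <= PI)
  (Hcos1 : Dreal (cos th1) =
           Ddiv (sp (Mproj1 X) (Mproj1 Y)) (Dmul (Mnorm sp (Mproj1 X)) (Mnorm sp (Mproj1 Y))))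
  (Hcos2 : Dreal (cos th2) =
           Ddiv (sp (Mproj2 X) (Mproj2 Y)) (Dmul (Mnorm sp (Mproj2 X)) (Mnorm sp (Mproj2 Y)))) :
  Dcos (mkD ((th1 + th2) / 2) ((th1 - th2) / 2)) =
  Ddiv (sp X Y) (Dmul (Dsqrt (sp X X)) (Dsqrt (sp Y Y))).
Proof.
  apply sp_inV_cos in Hcos1, Hcos2; auto using Mproj1_inV, Mproj2_inV.
  change (mkD ((th1 + th2) / 2) ((th1 - th2) / 2)) with (Didem th1 th2).
  rewrite Dcos_idem, (sp_idem Hsp HV X Y), (sp_idem Hsp HV X X), (sp_idem Hsp HV Y Y),
    Ddiv_sqrt_idem, <- Hcos1, <- Hcos2 by auto using sp_inV_gt0, Mproj1_inV, Mproj2_inV.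
  reflexivity.
Qed.
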